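(* Let $\mathcal{P}$ be a profile of unrooted phylogenetic trees whose display graph $G(\mathcal{P})$ is connected. If $F$ is a minimal separator of $\mathrm{LG}(\mathcal{P})$, then $\mathrm{LG}(\mathcal{P})-F'$ is connected for every proper subset $F'\subset F$.
   Context: A phylogenetic tree is an unrooted tree whose leaves are bijectively labeled (leaves identified with labels; internal vertices have degree at least three). A profile $\mathcal{P}=\{T_1,\dots,T_k\}$ is a finite collection of phylogenetic trees; internal vertices of distinct trees are disjoint, while leaves with the same label are the same vertex. The display graph $G(\mathcal{P})$ has vertex set $\bigcup_i V(T_i)$ and edge set $\bigcup_i E(T_i)$. $\mathrm{LG}(\mathcal{P})$ is the line graph of $G(\mathcal{P})$ (vertices are edges of $G(\mathcal{P})$, adjacent iff they share an endpoint). In a graph $G$, for nonadjacent vertices $a,b$, an $a$-$b$ separator is $U\subset V(G)$ with $a,b$ in different components of $G-U$; it is minimal if no proper subset is an $a$-$b$ separator; a minimal separator is a minimal $a$-$b$ separator for some nonadjacent $a,b$. *)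

From mathcomp Require Import all_boot.
Set Implicit Arguments. Unset Strict Implicit. Unset Printing Implicit Defensive.

Section Graphs.
Variable U : finType.

Definition induced (W : {set U}) (adj : rel U) : rel U :=
  fun x y => [&& x \in W, y \in W & adj x y].

Definition connected_on (W : {set U}) (adj : rel U) : Prop :=
  forall x y, x \in W -> y \in W -> connect (induced W adj) x y.

Definition separates (W : {set U}) (adj : rel U) (S : {set U}) (a b : U) : Prop :=
  [/\ S \subset W, a \in W :\: S, b \in W :\: S &
      ~~ connect (induced (W :\: S) adj) a b].

Definition min_separates (W : {set U}) (adj : rel U) (S : {set U}) (a b : U) : Prop :=
  separates W adj S a b /\
  forall S' : {set U}, S' \proper S -> ~ separates W adj S' a b.

Definition minimal_separator (W : {set U}) (adj : rel U) (S : {set U}) : Prop :=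
  exists a b, [/\ a \in W, b \in W, ~~ adj a b & min_separates W adj S a b].

End Graphs.

Section Trees.
Variable T : finType.

(* simple graphs given by an edge set of 2-element vertex sets *)
Definition eadj (Et : {set {set T}}) : rel T :=
  fun x y => (x != y) && ([set x; y] \in Et).

Definition tdeg (Et : {set {set T}}) (v : T) : nat := #|[set e in Et | v \in e]|.

Definition is_tree (Vt : {set T}) (Et : {set {set T}}) : Prop :=
  [/\ forall e, e \in Et -> (#|e| == 2) && (e \subset Vt),
      Vt != set0,
      connected_on Vt (eadj Et) &
      forall s : seq T, uniq s -> 3 <= size s -> ~~ cycle (eadj Et) s].

(* leaves: vertices of degree at most 1 (degree 0 only for a one-vertex tree) *)
Definition leaves (Vt : {set T}) (Et : {set {set T}}) : {set T} :=
  [set v in Vt | tdeg Et v <= 1].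

(* phylogenetic tree: internal vertices have degree >= 3; the leaves are the labels *)
Definition is_phylo_tree (Vt : {set T}) (Et : {set {set T}}) : Prop :=
  is_tree Vt Et /\ forall v, v \in Vt -> tdeg Et v != 2.

(* a profile of k phylogenetic trees: distinct trees share only leaves (labels) *)
Definition is_profile (k : nat) (V : 'I_k -> {set T}) (E : 'I_k -> {set {set T}}) : Prop :=
  (forall i, is_phylo_tree (V i) (E i)) /\
  (forall i j, i != j -> V i :&: V j \subset leaves (V i) (E i) :&: leaves (V j) (E j)).

Definition display_vertices k (V : 'I_k -> {set T}) : {set T} := \bigcup_(i < k) V i.
Definition display_edges k (E : 'I_k -> {set {set T}}) : {set {set T}} := \bigcup_(i < k) E i.

(* line graph: vertices = edges of the display graph, adjacent iff distinct and sharing an endpoint *)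
Definition line_adj : rel {set T} := fun e f => (e != f) && (e :&: f != set0).

End Trees.

From mathcomp Require Import all_boot.
Set Implicit Arguments. Unset Strict Implicit. Unset Printing Implicit Defensive.

(* Only two facts about the display graph matter: every edge has exactly two
   endpoints, and the line graph is connected.  Let F be a minimal a-b
   separator of the line graph.  Every edge u of F is adjacent both to the
   component of a and to the component of b in LG - F (otherwise F :\ u would
   still separate).  Any other neighbour q of u shares an endpoint of u with
   one of these two adjacent edges, since u has only two endpoints, so q lies
   in the component of a or of b.  By connectivity, LG - F is thus exactly the
   component of a, the component of b and nothing else.  Putting back any edge
   f of F joins these two components, and every other edge of F is adjacent
   to one of them, so LG - F' is connected for F' a proper subset of F. *)

Lemma connect_invariant (U : finType) (e : rel U) (P : pred U) x y :
  P x -> (forall u v, P u -> e u v -> P v) -> connect e x y -> P y.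
Proof.
move=> Px Pe /connectP [p pth ->]; elim: p x Px pth => [|z p IH] x Px //=.
by case/andP=> exz pth; exact: IH (Pe _ _ Px exz) pth.
Qed.

Section LineGraph.
Variable T : finType.
Local Notation lg S := (induced S (@line_adj T)).

Lemma line_adj_sym : symmetric (@line_adj T).
Proof. by move=> e f; rewrite /line_adj eq_sym setIC. Qed.

Lemma connect_line_sym (S : {set {set T}}) : connect_sym (lg S).
Proof.
by apply: sym_connect_sym => e f; rewrite /induced line_adj_sym andbCA.
Qed.

Lemma connect_line_subset (S1 S2 : {set {set T}}) e f : S1 \subset S2 ->
  connect (lg S1) e f -> connect (lg S2) e f.
Proof.
move=> sS; apply: connect_sub => u v /and3P [uS vS uv]; apply: connect1.
by rewrite /induced (subsetP sS _ uS) (subsetP sS _ vS).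
Qed.

Lemma connect_line_mem (S : {set {set T}}) e f : e \in S ->
  connect (lg S) e f -> f \in S.
Proof. by move=> eS; apply: connect_invariant eS _ => u v _ /and3P []. Qed.

Lemma connect_line_meet (S : {set {set T}}) e f g : f \in S -> g \in S ->
  f :&: g != set0 -> connect (lg S) e f -> connect (lg S) e g.
Proof.
move=> fS gS fg Cef; case: (eqVneq f g) => [<- //|nfg].
by apply: connect_trans Cef (connect1 _); rewrite /induced fS gS /line_adj nfg.
Qed.

Lemma meet_card2 (u c d q : {set T}) : #|u| = 2 ->
  c :&: u != set0 -> d :&: u != set0 -> q :&: u != set0 ->
  [|| c :&: d != set0, c :&: q != set0 | d :&: q != set0].
Proof.
move/eqP/cards2P=> [x [y [_ ->]]].
have hit A : A :&: [set x; y] != set0 -> (x \in A) || (y \in A).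
  by case/set0Pn=> v; rewrite !inE => /andP [vA /orP [] /eqP <-]; rewrite vA ?orbT.
have meet v (A B : {set T}) : v \in A -> v \in B -> A :&: B != set0.
  by move=> vA vB; apply/set0Pn; exists v; rewrite inE vA.
move=> /hit/orP [] hc /hit/orP [] hd /hit/orP [] hq; apply/or3P;
  by first [exact: Or31 (meet _ _ _ hc hd) | exact: Or32 (meet _ _ _ hc hq)
           | exact: Or33 (meet _ _ _ hd hq)].
Qed.

Lemma connected_line_graph (Vd : {set T}) (W : {set {set T}}) :
  (forall e, e \in W -> e != set0) -> (forall e, e \in W -> e \subset Vd) ->
  connected_on Vd (eadj W) -> connected_on W (@line_adj T).
Proof.
move=> W_nonempty W_sub Vd_conn e1 e2 e1W e2W.
have [x xe1] := set0Pn _ (W_nonempty _ e1W).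
have [y ye2] := set0Pn _ (W_nonempty _ e2W).
pose reached v := [exists e, [&& e \in W, v \in e & connect (lg W) e1 e]].
have /existsP [e /and3P [eW ye Ce]] : reached y.
  apply: connect_invariant (Vd_conn x y _ _); last 2 first.
  - exact: subsetP (W_sub _ e1W) _ xe1.
  - exact: subsetP (W_sub _ e2W) _ ye2.
  - by apply/existsP; exists e1; rewrite e1W xe1 connect0.
  move=> v w /existsP [f /and3P [fW vf Cf]] /and3P [_ _ /andP [_ vwW]].
  apply/existsP; exists [set v; w]; rewrite vwW set22 /=.
  by apply: connect_line_meet fW vwW _ Cf; apply/set0Pn; exists v; rewrite !inE vf eqxx.
by apply: connect_line_meet eW e2W _ Ce; apply/set0Pn; exists y; rewrite inE ye ye2.
Qed.

Section MinimalSeparator.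
Variable W F : {set {set T}}.
Local Notation side x := (connect (lg (W :\: F)) x).

Lemma min_separates_sym a b :
  min_separates W (@line_adj T) F a b -> min_separates W (@line_adj T) F b a.
Proof.
case => [[FW aWF bWF nab] minF]; split.
  by split=> //; rewrite connect_line_sym.
by move=> S' /minF nsep [S'W aWS' bWS' nba]; apply: nsep; split; rewrite // connect_line_sym.
Qed.

Lemma min_separates_reconnect a b u : min_separates W (@line_adj T) F a b ->
  u \in F -> connect (lg (W :\: (F :\ u))) a b.
Proof.
case => [[FW aWF bWF _] minF] uF; apply/negPn/negP => nab.
apply: (minF _ (properD1 uF)); split=> //.
- exact: subset_trans (subD1set F u) FW.
- by move: aWF; rewrite !inE => /andP [/negbTE -> ->]; rewrite andbF.
- by move: bWF; rewrite !inE => /andP [/negbTE -> ->]; rewrite andbF.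
Qed.

Lemma min_separates_side_adj a b u : min_separates W (@line_adj T) F a b ->
  u \in F -> exists2 c, side a c & line_adj c u.
Proof.
move=> sepF uF; case: (sepF) => [[_ aWF _ nab] _].
have [/existsP [c /andP [Cc cu]]|no_adj] :=
  boolP [exists c, side a c && line_adj c u]; first by exists c.
case/negP: nab; apply: connect_invariant (min_separates_reconnect sepF uF) => //.
move=> p q Cp /and3P [_ qX pq]; have pWF := connect_line_mem aWF Cp.
have nqu : q != u by apply: contraNneq no_adj => <-; apply/existsP; exists p; rewrite Cp.
by apply: connect_trans Cp (connect1 _); move: qX; rewrite /induced pWF pq !inE nqu andbT.
Qed.

Variables a b : {set T}.
Hypothesis sepF : min_separates W (@line_adj T) F a b.
Hypothesis W_card2 : forall e, e \in W -> #|e| = 2.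

Lemma min_separates_neighbour_side u q : u \in F -> q \in W :\: F ->
  u :&: q != set0 -> side a q || side b q.
Proof.
move=> uF qWF uq; case: (sepF) => [[FW aWF bWF nab] _].
have [c Cc /andP [_ cu]] := min_separates_side_adj sepF uF.
have [d Cd /andP [_ du]] := min_separates_side_adj (min_separates_sym sepF) uF.
have cWF := connect_line_mem aWF Cc; have dWF := connect_line_mem bWF Cd.
have qu : q :&: u != set0 by rewrite setIC.
case/or3P: (meet_card2 (W_card2 (subsetP FW _ uF)) cu du qu) => [cd|cq|dq].
- case/negP: nab; apply: connect_trans (connect_line_meet cWF dWF cd Cc) _.
  by rewrite connect_line_sym.
- by rewrite (connect_line_meet cWF qWF cq Cc).
- by rewrite (connect_line_meet dWF qWF dq Cd) orbT.
Qed.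

Hypothesis W_connected : connected_on W (@line_adj T).

Lemma min_separates_cover e : e \in W -> [|| e \in F, side a e | side b e].
Proof.
case: sepF => [[_ aWF bWF _] _] eW.
have aW : a \in W by move: aWF; rewrite inE => /andP [].
apply: (connect_invariant (P := fun e => [|| e \in F, side a e | side b e]))
  (W_connected aW eW); first by rewrite connect0 orbT.
move=> p q sp /and3P [_ qW /andP [_ pq]].
have [//|qF] := boolP (q \in F); have qWF : q \in W :\: F by rewrite inE qF.
case/or3P: sp => [pF|Cp|Cp] /=.
- exact: min_separates_neighbour_side pF qWF pq.
- by rewrite (connect_line_meet (connect_line_mem aWF Cp) qWF pq Cp).
- by rewrite (connect_line_meet (connect_line_mem bWF Cp) qWF pq Cp) orbT.
Qed.

Lemma min_separates_proper_connected (F' : {set {set T}}) :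
  F' \proper F -> connected_on (W :\: F') (@line_adj T).
Proof.
case: sepF => [[_ aWF bWF _] _] /properP [sF'F [f fF fF']].
have sub_F' : W :\: (F :\ f) \subset W :\: F'.
  apply/subsetP => q; rewrite !inE => /andP [qFu ->]; rewrite andbT.
  apply: contraNN qFu => qF'; rewrite (subsetP sF'F _ qF') andbT.
  by apply: contraNneq fF' => <-.
have sideF' x y : side x y -> connect (lg (W :\: F')) x y.
  exact/connect_line_subset/setDS.
have to_a e : e \in W :\: F' -> connect (lg (W :\: F')) a e.
  case/setDP=> eW eF'; case/or3P: (min_separates_cover eW) => [eF|/sideF'//|Cb].
    have [c Cc ce] := min_separates_side_adj sepF eF.
    apply: connect_trans (sideF' _ _ Cc) (connect1 _).
    by rewrite /induced ce (subsetP (setDS W sF'F) _ (connect_line_mem aWF Cc)) !inE eW eF'.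
  apply: connect_trans (sideF' _ _ Cb).
  exact: connect_line_subset sub_F' (min_separates_reconnect sepF fF).
move=> x y xR yR; apply: connect_trans (to_a y yR).
by rewrite connect_line_sym; exact: to_a.
Qed.

End MinimalSeparator.
End LineGraph.

Lemma profile_edge (T : finType) (k : nat)
    (V : 'I_k -> {set T}) (E : 'I_k -> {set {set T}}) e :
  is_profile V E -> e \in display_edges E ->
  #|e| = 2 /\ e \subset display_vertices V.
Proof.
move=> [trees _] /bigcupP [i _ eEi]; have [[edges _ _ _] _] := trees i.
case/andP: (edges e eEi) => /eqP -> eVi; split=> //.
exact: subset_trans eVi (bigcup_sup i (P := xpredT) _).
Qed.

Theorem corollary1 (T : finType) (k : nat)
    (V : 'I_k -> {set T}) (E : 'I_k -> {set {set T}}) :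
  is_profile V E ->
  connected_on (display_vertices V) (eadj (display_edges E)) ->
  forall F : {set {set T}},
    minimal_separator (display_edges E) (@line_adj T) F ->
    forall F' : {set {set T}}, F' \proper F ->
      connected_on (display_edges E :\: F') (@line_adj T).
Proof.
move=> profVE displ_conn F [a [b [_ _ _ sepF]]] F'.
have card2 e : e \in display_edges E -> #|e| = 2 by case/(profile_edge profVE).
apply: (min_separates_proper_connected sepF card2).
apply: (connected_line_graph _ _ displ_conn) => e /(profile_edge profVE) [] //.
by rewrite -card_gt0 => ->.
Qed.
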